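(* Let $G$ be a graph on $V$ and let $W_1,W_2\subseteq V$ be disjoint, with $W_1$ reducible in $G$. Then $W_2$ is reducible in $\Gamma_{W_1}(G)$ if and only if $W_1\cup W_2$ is reducible in $G$, and in this case $\Gamma_{W_1\cup W_2}(G)=\Gamma_{W_2}(\Gamma_{W_1}(G))$.
   Context: A graph means a finite simple graph in which loops are allowed, with adjacency matrix $A$ over $\mathbf F_2$ ($A_{vv}=1$ iff $v$ has a loop). Let $\mathcal V$ be the $\mathbf F_2$-vector space with basis $V$ and $\mathcal E(x,y)=x^TAy$. For $W\subseteq V$, $\langle W\rangle$ is the span of $W$ and $\langle W\rangle^{\perp\mathcal E}=\{x\in\mathcal V:\mathcal E(x,w)=0\ \forall w\in\langle W\rangle\}$. $W$ is reducible in $G$ if $\langle W\rangle+\langle W\rangle^{\perp\mathcal E}=\mathcal V$. For reducible $W$, define $\mathcal E^W(x_1,x_2)=\mathcal E(x_1',x_2')$ where $x_i'\in\langle W\rangle^{\perp\mathcal E}$ are any vectors with $x_i-x_i'\in\langle W\rangle$ (well defined); the graph reduction $\Gamma_W(G)$ is the graph on vertex set $V\setminus W$ in which $v,w$ (possibly equal) are joined iff $\mathcal E^W(v,w)=1$. *)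

From HB Require Import structures.
From mathcomp Require Import all_boot all_order all_algebra.
Set Implicit Arguments. Unset Strict Implicit. Unset Printing Implicit Defensive.
Import GRing.Theory.
Local Open Scope ring_scope.

(* A graph (loops allowed) with finite vertex set [verts] inside an ambient
   finite type [T]; adjacency [adj] is only meaningful on [verts]. *)
Record graph (T : finType) := Graph { verts : {set T}; adj : rel T }.

Definition graph_sym (T : finType) (G : graph T) : Prop :=
  forall u v, u \in verts G -> v \in verts G -> adj G u v = adj G v u.

(* Vectors of F_2^T; the space 𝒱 consists of those supported on verts G. *)
Definition vec (T : finType) := {ffun T -> 'F_2}.

Definition inV (T : finType) (G : graph T) (x : vec T) : bool :=
  [forall v, (v \notin verts G) ==> (x v == 0)].

Definition delta (T : finType) (v : T) : vec T := [ffun u => ((u == v) : nat)%:R].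

Definition E (T : finType) (G : graph T) (x y : vec T) : 'F_2 :=
  \sum_(u in verts G) \sum_(v in verts G) x u * (adj G u v : nat)%:R * y v.

Definition inspan (T : finType) (G : graph T) (W : {set T}) (x : vec T) : bool :=
  inV G x && [forall v, (v \notin W) ==> (x v == 0)].

Definition inperp (T : finType) (G : graph T) (W : {set T}) (x : vec T) : bool :=
  inV G x && [forall w, inspan G W w ==> (E G x w == 0)].

Definition reducible (T : finType) (G : graph T) (W : {set T}) : Prop :=
  forall x, inV G x -> exists a b, [&& inspan G W a & inperp G W b] /\ x = a + b.

(* some x' ∈ <W>^{⊥E} with x - x' ∈ <W> (exists when W is reducible) *)
Definition proj (T : finType) (G : graph T) (W : {set T}) (x : vec T) : vec T :=
  odflt 0 [pick x' | inperp G W x' && inspan G W (x - x')].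

Definition EW (T : finType) (G : graph T) (W : {set T}) (x1 x2 : vec T) : 'F_2 :=
  E G (proj G W x1) (proj G W x2).

Definition reduction (T : finType) (G : graph T) (W : {set T}) : graph T :=
  Graph (verts G :\: W) (fun v w => EW G W (delta v) (delta w) == 1).

Definition graph_eq (T : finType) (G H : graph T) : Prop :=
  verts G = verts H /\
  forall u v, u \in verts G -> v \in verts G -> adj G u v = adj H u v.

(* Call x' a W-projection of x when x' ∈ <W>^⊥E and x - x' ∈ <W>.  W is
   reducible iff every x ∈ 𝒱 has a W-projection, and for a symmetric graph
   E(x', y') does not depend on the projections chosen.  The key fact is that
   the form of Γ_{W1}(G) is E evaluated on W1-projections (E_reduction), which
   follows by bilinearity after expanding vectors in the vertex basis.  From it:
   - a W2-projection b of x in Γ_{W1}(G) yields the (W1 ∪ W2)-projection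
     proj_{W1} b of x in G (proj_lift);
   - a (W1 ∪ W2)-projection b of x ∈ V \ W1 yields a W2-projection of x in
     Γ_{W1}(G): x minus the part of x - b lying outside W1 (proj_descend).
   Together they give the equivalence of reducibility; proj_lift applied to
   basis vectors, with independence of projections, identifies the adjacency
   of the two reduced graphs. *)

From HB Require Import structures.
From mathcomp Require Import all_boot all_order all_algebra.
Set Implicit Arguments. Unset Strict Implicit. Unset Printing Implicit Defensive.
Import GRing.Theory.
Local Open Scope ring_scope.

HB.instance Definition _ (T : finType) :=
  GRing.Lmodule.copy (vec T) {ffun T -> ('F_2)^o}.

Lemma scaleE (T : finType) (c : 'F_2) (x : vec T) v : (c *: x) v = c * x v.
Proof. by rewrite ffunE. Qed.

Lemma F2_eq1 (e : 'F_2) : (((e == 1) : nat)%:R : 'F_2) = e.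
Proof. by case: e => -[|[|n]] H; apply: val_inj. Qed.

Definition supported (T : finType) (A : {set T}) (x : vec T) : bool :=
  [forall v, (v \notin A) ==> (x v == 0)].

Lemma supportP (T : finType) (A : {set T}) (x : vec T) :
  reflect (forall v, v \notin A -> x v = 0) (supported A x).
Proof. by apply: (iffP forallP) => H v; [move/(implyP (H v))/eqP | apply/implyP => /H ->]. Qed.

Lemma support_closed (T : finType) (A : {set T}) : subsemimod_closed (supported A).
Proof.
split; [split|]; rewrite ?unfold_in.
- by apply/supportP => v _; rewrite ffunE.
- by move=> x y /supportP hx /supportP hy; apply/supportP => v hv; rewrite ffunE hx ?hy ?addr0.
- by move=> c x /supportP hx; apply/supportP => v hv; rewrite scaleE hx ?mulr0.
Qed.

HB.instance Definition _ (T : finType) (A : {set T}) :=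
  GRing.isSubmodClosed.Build _ _ (supported A) (support_closed A).
HB.instance Definition _ (T : finType) (G : graph T) :=
  GRing.isSubmodClosed.Build _ _ (inV G) (support_closed (verts G)).

Lemma inspanE (T : finType) (G : graph T) (W : {set T}) (x : vec T) :
  (x \in inspan G W) = (x \in inV G) && (x \in supported W).
Proof. by []. Qed.

Lemma inspan_closed (T : finType) (G : graph T) (W : {set T}) :
  subsemimod_closed (inspan G W).
Proof.
split; [split|] => [|x y|c x]; rewrite !inspanE.
- by rewrite !rpred0.
- by case/andP=> x1 x2 /andP[y1 y2]; rewrite !rpredD.
- by case/andP=> x1 x2; rewrite !rpredZ.
Qed.
HB.instance Definition _ (T : finType) (G : graph T) (W : {set T}) :=
  GRing.isSubmodClosed.Build _ _ (inspan G W) (inspan_closed G W).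

Section BilinearForm.
Variables (T : finType) (G : graph T).
Implicit Types (x y z : vec T).

Lemma E_Dl x y z : E G (x + y) z = E G x z + E G y z.
Proof.
rewrite /E -big_split; apply: eq_bigr => u _; rewrite -big_split.
by apply: eq_bigr => v _; rewrite ffunE !mulrDl.
Qed.

Lemma E_Zl c x z : E G (c *: x) z = c * E G x z.
Proof.
rewrite /E mulr_sumr; apply: eq_bigr => u _; rewrite mulr_sumr.
by apply: eq_bigr => v _; rewrite scaleE !mulrA.
Qed.

Lemma E_Dr x y z : E G z (x + y) = E G z x + E G z y.
Proof.
rewrite /E -big_split; apply: eq_bigr => u _; rewrite -big_split.
by apply: eq_bigr => v _; rewrite ffunE mulrDr.
Qed.

Lemma E_0l z : E G 0 z = 0.
Proof. by rewrite /E big1 // => u _; rewrite big1 // => v _; rewrite ffunE !mul0r. Qed.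

Lemma E_suml (I : Type) (r : seq I) (P : pred I) (F : I -> vec T) z :
  E G (\sum_(i <- r | P i) F i) z = \sum_(i <- r | P i) E G (F i) z.
Proof. exact: (big_morph (E G ^~ z) (fun x y => E_Dl x y z) (E_0l z)). Qed.

Lemma E_sym x y : graph_sym G -> E G x y = E G y x.
Proof.
move=> sym; rewrite /E exchange_big; apply: eq_bigr => u hu; apply: eq_bigr => v hv.
by rewrite (sym _ _ hv hu) mulrC [x v * _]mulrC mulrA.
Qed.

End BilinearForm.

Section Subspaces.
Variables (T : finType) (G : graph T).
Implicit Types (W : {set T}) (x w b : vec T).

Lemma inVP x : reflect (forall v, v \notin verts G -> x v = 0) (inV G x).
Proof. exact: supportP. Qed.

Lemma inspanP W x : reflect (inV G x /\ forall v, v \notin W -> x v = 0) (inspan G W x).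
Proof. by apply: (iffP andP) => -[x1 /supportP x2]; split => //; apply/supportP. Qed.

Lemma inperpP W b :
  reflect (inV G b /\ forall w, inspan G W w -> E G b w = 0) (inperp G W b).
Proof.
apply: (iffP andP) => -[b1 b2]; split => //.
  by move=> w hw; apply/eqP; exact: (implyP (forallP b2 w)).
by apply/forallP => w; apply/implyP => /b2 ->.
Qed.

Lemma inspan_inV W x : inspan G W x -> inV G x. Proof. by case/andP. Qed.
Lemma inperp_inV W b : inperp G W b -> inV G b. Proof. by case/andP. Qed.

Lemma inspan_verts x : inspan G (verts G) x = inV G x.
Proof. by rewrite /inspan andbb. Qed.

Lemma inspan_mono W W' x : W \subset W' -> inspan G W x -> inspan G W' x.
Proof.
move=> sWW' /inspanP[x1 x2]; apply/inspanP; split=> // v hv.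
by apply: x2; apply: contra hv; apply: (subsetP sWW').
Qed.

Lemma inperp_mono W W' b : W \subset W' -> inperp G W' b -> inperp G W b.
Proof.
move=> sWW' /inperpP[b1 b2]; apply/inperpP; split=> // w hw.
exact/b2/(inspan_mono sWW').
Qed.

Lemma inperp_closed W : subsemimod_closed (inperp G W).
Proof.
split; [split|] => [|x y|c x]; rewrite !unfold_in.
- by apply/inperpP; split=> [|w _]; [apply: rpred0 | rewrite E_0l].
- move=> /inperpP[x1 x2] /inperpP[y1 y2]; apply/inperpP; split; first exact: rpredD.
  by move=> w hw; rewrite E_Dl x2 ?y2 ?addr0.
- move=> /inperpP[x1 x2]; apply/inperpP; split; first exact: rpredZ.
  by move=> w hw; rewrite E_Zl x2 ?mulr0.
Qed.

End Subspaces.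

HB.instance Definition _ (T : finType) (G : graph T) (W : {set T}) :=
  GRing.isSubmodClosed.Build _ _ (inperp G W) (inperp_closed G W).

Definition restr (T : finType) (A : {set T}) (x : vec T) : vec T :=
  [ffun u => if u \in A then x u else 0].

Section Coordinates.
Variables (T : finType) (G : graph T).
Implicit Types (A W : {set T}) (x : vec T).

Lemma restr_split A x : x = restr A x + restr (~: A) x.
Proof. by apply/ffunP => u; rewrite !ffunE inE; case: (u \in A); rewrite ?addr0 ?add0r. Qed.

Lemma restr_inspan W A x : inspan G W x -> inspan G (W :&: A) (restr A x).
Proof.
move=> /inspanP[/inVP x1 x2]; apply/inspanP; split.
  by apply/inVP => v hv; rewrite ffunE x1 ?if_same.
by move=> v; rewrite ffunE inE negb_and => /orP[/x2 -> | /negbTE ->]; rewrite ?if_same.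
Qed.

Lemma delta_inV u : u \in verts G -> inV G (delta u).
Proof. by move=> hu; apply/inVP => v hv; rewrite ffunE; case: eqP hv => // ->; rewrite hu. Qed.

Lemma delta_decomp x : inV G x -> x = \sum_(u in verts G) x u *: delta u.
Proof.
move/inVP=> x0; apply/ffunP => w; rewrite sum_ffunE.
under eq_bigr => u _ do rewrite scaleE ffunE eq_sym.
case: (boolP (w \in verts G)) => hw.
  by rewrite (bigD1 w) //= eqxx mulr1 big1 ?addr0 // => u /andP[_ /negbTE ->]; rewrite mulr0.
rewrite x0 // big1 // => u hu.
by case: eqP => [uw | _]; [by rewrite -uw hu in hw | rewrite mulr0].
Qed.

End Coordinates.

Definition is_proj (T : finType) (G : graph T) (W : {set T}) (x x' : vec T) : bool :=
  inperp G W x' && inspan G W (x - x').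

Section Projections.
Variables (T : finType) (G : graph T) (W : {set T}).
Implicit Types (x y w b : vec T).

Lemma reducibleP :
  reducible G W <-> forall x, inV G x -> exists x', is_proj G W x x'.
Proof.
split=> red x /red.
  by move=> [a [b [/andP[ha hb] ->]]]; exists b; rewrite /is_proj hb addrK.
by move=> [x' /andP[h1 h2]]; exists (x - x'), x'; rewrite h1 h2 subrK.
Qed.

Lemma proj_spec x : reducible G W -> inV G x -> is_proj G W x (proj G W x).
Proof.
move=> /reducibleP red /red [x' hx']; rewrite /proj.
by case: pickP => [//|/(_ x')]; rewrite /= -/(is_proj G W x x') hx'.
Qed.

Lemma is_proj_lincomb (I : finType) (A : {pred I}) (c : I -> 'F_2) (F F' : I -> vec T) :
  (forall i, i \in A -> is_proj G W (F i) (F' i)) ->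
  is_proj G W (\sum_(i in A) c i *: F i) (\sum_(i in A) c i *: F' i).
Proof.
move=> hF; apply/andP; split.
  by apply: rpred_sum => i /hF /andP[h _]; apply: rpredZ.
rewrite -sumrB; apply: rpred_sum => i /hF /andP[_ h].
by rewrite -scalerBr; apply: rpredZ.
Qed.

Lemma is_proj_shift x y x' : is_proj G W x x' -> inspan G W (y - x) -> is_proj G W y x'.
Proof.
case/andP=> h1 h2 h3; rewrite /is_proj h1 -(subrK x y) -addrA.
exact: rpredD.
Qed.

Lemma E_perp_proj b w w' : inperp G W b -> is_proj G W w w' -> E G b w' = E G b w.
Proof.
move=> /inperpP[_ hb] /andP[_ hw].
by rewrite -(subrK w' w) E_Dr (hb _ hw) add0r.
Qed.

Lemma E_proj_wd x x1 x2 y y1 y2 : graph_sym G ->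
  is_proj G W x x1 -> is_proj G W x x2 -> is_proj G W y y1 -> is_proj G W y y2 ->
  E G x1 y1 = E G x2 y2.
Proof.
move=> sym px1 px2 py1 py2.
have [/andP[x1p _] /andP[y2p _]] := (px1, py2).
rewrite (E_perp_proj x1p py1) -(E_perp_proj x1p py2) (E_sym x1 _ sym) (E_sym x2 _ sym).
by rewrite (E_perp_proj y2p px1) (E_perp_proj y2p px2).
Qed.

End Projections.

Section Reduction.
Variables (T : finType) (G : graph T) (W1 : {set T}).
Hypotheses (G_sym : graph_sym G) (W1_red : reducible G W1).
Local Notation G1 := (reduction G W1).
Implicit Types (x y w b : vec T).

Lemma inV_reduction x : inV G1 x = inspan G (verts G :\: W1) x.
Proof.
apply/idP/andP => [hx | [] //]; split=> //; apply/inVP => v hv.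
by apply: (inVP _ _ hx); rewrite inE negb_and hv orbT.
Qed.

Lemma reduction_inV x : inV G1 x -> inV G x.
Proof. by rewrite inV_reduction => /inspan_inV. Qed.

Lemma inspan_reduction (W2 : {set T}) w : [disjoint W1 & W2] -> inspan G1 W2 w = inspan G W2 w.
Proof.
move=> dis; apply/idP/idP => /inspanP[w1 w2]; apply/inspanP; split => //.
  exact: reduction_inV.
rewrite inV_reduction; apply/inspanP; split=> // v; rewrite inE negb_and negbK.
by case/orP=> [/(disjointFr dis)/negbT | ]; [apply: w2 | apply: (inVP _ _ w1)].
Qed.

Lemma E_reduction x y x' y' : inV G1 x -> inV G1 y ->
  is_proj G W1 x x' -> is_proj G W1 y y' -> E G1 x y = E G x' y'.
Proof.
move=> hx hy px py; pose P u := proj G W1 (delta u).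
have lift z : inV G1 z -> is_proj G W1 z (\sum_(u in verts G1) z u *: P u).
  move=> hz; rewrite {1}(delta_decomp hz); apply: is_proj_lincomb => u.
  by rewrite inE => /andP[_ hu]; apply/(proj_spec W1_red)/delta_inV.
rewrite (E_proj_wd G_sym px (lift x hx) py (lift y hy)) E_suml {1}/E.
apply: eq_bigr => u _; rewrite E_Zl (E_sym _ _ G_sym) E_suml mulr_sumr.
apply: eq_bigr => v _; rewrite E_Zl (E_sym _ _ G_sym) /= F2_eq1.
by rewrite [y v * _]mulrC mulrA.
Qed.

Lemma E_reduction_proj x y :
  inV G1 x -> inV G1 y -> E G1 x y = E G (proj G W1 x) (proj G W1 y).
Proof.
by move=> hx hy; apply: E_reduction => //; apply/(proj_spec W1_red)/reduction_inV.
Qed.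

Variable W2 : {set T}.
Hypothesis W12_disjoint : [disjoint W1 & W2].
Local Notation U := (W1 :|: W2).

Let restr_W1 w : inspan G U w -> inspan G W1 (restr W1 w).
Proof. by move/(restr_inspan W1); apply: inspan_mono; rewrite subsetIr. Qed.

Let restr_notW1 w : inspan G U w -> inspan G W2 (restr (~: W1) w).
Proof.
move/(restr_inspan (~: W1)); apply: inspan_mono.
by rewrite setIUl setICr set0U subsetIl.
Qed.

Lemma perp_lift b : inperp G1 W2 b -> inperp G U (proj G W1 b).
Proof.
move=> hb; have bV1 := inperp_inV hb.
have /andP[pb _] := proj_spec W1_red (reduction_inV bV1).
apply/inperpP; split=> [|w hw]; first exact: inperp_inV pb.
have w2V1 : inV G1 (restr (~: W1) w).
  by rewrite inV_reduction setDE restr_inspan // inspan_verts (inspan_inV hw).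
rewrite (restr_split W1 w) E_Dr (inperpP _ _ _ pb).2 ?restr_W1 // add0r.
rewrite -(E_perp_proj pb (proj_spec W1_red (reduction_inV w2V1))) -E_reduction_proj //.
by rewrite (inperpP _ _ _ hb).2 // inspan_reduction // restr_notW1.
Qed.

Lemma proj_lift x b : is_proj G1 W2 x b -> is_proj G U x (proj G W1 b).
Proof.
case/andP=> hb hxb; rewrite /is_proj perp_lift //=.
have /andP[_ hbb] := proj_spec W1_red (reduction_inV (inperp_inV hb)).
rewrite -(subrK b x) -addrA; apply: rpredD.
  by apply: inspan_mono (subsetUr _ _) _; rewrite -inspan_reduction.
exact: inspan_mono (subsetUl _ _) hbb.
Qed.

Lemma proj_descend x b :
  inV G1 x -> is_proj G U x b -> is_proj G1 W2 x (x - restr (~: W1) (x - b)).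
Proof.
move=> hx /andP[hb hxb]; set a := restr (~: W1) (x - b).
have aW2 : inspan G1 W2 a by rewrite inspan_reduction // restr_notW1.
have hb1 := inperp_mono (subsetUl _ _) hb.
have xaV1 : inV G1 (x - a) by apply: rpredB => //; exact: inspan_inV aW2.
have pb : is_proj G W1 (x - a) b.
  rewrite /is_proj hb1 addrAC {1}(restr_split W1 (x - b)) addrK.
  exact: restr_W1.
rewrite /is_proj subKr aW2 andbT; apply/inperpP; split=> // w hw.
have pw := proj_spec W1_red (reduction_inV (inspan_inV hw)).
rewrite (E_reduction xaV1 (inspan_inV hw) pb pw) (E_perp_proj hb1 pw).
by rewrite (inperpP _ _ _ hb).2 // (inspan_mono (subsetUr _ _)) // -inspan_reduction.
Qed.

Lemma reducible_reduction : reducible G1 W2 <-> reducible G U.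
Proof.
split=> /reducibleP red; apply/reducibleP => x hx.
  have x1V : inV G1 (restr (~: W1) x).
    by rewrite inV_reduction setDE restr_inspan // inspan_verts.
  have [b pb] := red _ x1V; exists (proj G W1 b).
  apply: is_proj_shift (proj_lift pb) _.
  rewrite {1}(restr_split W1 x) addrK; apply: inspan_mono (subsetUl _ _) _.
  apply: (inspan_mono (subsetIr (verts G) _)).
  by apply: restr_inspan; rewrite inspan_verts.
have [b pb] := red _ (reduction_inV hx).
by exists (x - restr (~: W1) (x - b)); apply: proj_descend.
Qed.

Lemma reduction_reduction :
  reducible G U -> graph_eq (reduction G U) (reduction G1 W2).
Proof.
move=> redU; have red2 : reducible G1 W2 by apply/reducible_reduction.
split=> [|u v]; rewrite /= -setDDl // => /setDP[hu _] /setDP[hv _].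
pose q z := proj G1 W2 (delta z).
have pq z : z \in verts G1 -> is_proj G1 W2 (delta z) (q z).
  by move=> hz; apply/(proj_spec red2)/delta_inV.
have qV z : z \in verts G1 -> inV G1 (q z) by move/pq/andP => [/inperp_inV].
have pU z : z \in verts G1 -> is_proj G U (delta z) (proj G U (delta z)).
  by rewrite inE => /andP[_ hz]; apply/(proj_spec redU)/delta_inV.
congr (_ == 1); rewrite /EW E_reduction_proj ?qV //.
exact: E_proj_wd G_sym (pU u hu) (proj_lift (pq u hu)) (pU v hv) (proj_lift (pq v hv)).
Qed.

End Reduction.

Theorem mainTheorem6 (T : finType) (G : graph T) (W1 W2 : {set T}) :
  graph_sym G ->
  W1 \subset verts G -> W2 \subset verts G -> [disjoint W1 & W2] ->
  reducible G W1 ->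
  (reducible (reduction G W1) W2 <-> reducible G (W1 :|: W2)) /\
  (reducible G (W1 :|: W2) ->
     graph_eq (reduction G (W1 :|: W2)) (reduction (reduction G W1) W2)).
Proof.
move=> G_sym _ _ W12_disjoint W1_red; split.
  exact: reducible_reduction.
exact: reduction_reduction.
Qed.
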